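(* Let $\{\mathcal N,\gamma,\boldsymbol\ell,\ell^{(2)}\}$ be metric hypersurface data and $p\in\mathcal N$ a point with $\mathrm{Rad}(\gamma|_p)\neq\{0\}$. Then $$\mathrm{sign}(\boldsymbol{\mathcal A}|_p)=\{-1,1\}\sqcup\big(\mathrm{sign}(\gamma|_p)\setminus\{0\}\big),$$ where $\sqcup$ is disjoint union (of multisets). In particular, $\boldsymbol{\mathcal A}|_p$ has Lorentzian signature if and only if $\gamma|_p$ is positive semi-definite.
   Context: Metric hypersurface data: $\mathcal N$ a smooth manifold, $\gamma$ a symmetric $2$-covariant tensor field, $\boldsymbol\ell$ a one-form and $\ell^{(2)}$ a function such that for every $p$ the symmetric bilinear form $\boldsymbol{\mathcal A}|_p((W,a),(Z,b))=\gamma|_p(W,Z)+a\boldsymbol\ell|_p(Z)+b\boldsymbol\ell|_p(W)+ab\,\ell^{(2)}(p)$ on $T_p\mathcal N\times\mathbb R$ is non-degenerate. $\mathrm{Rad}(\gamma|_p)=\{X\in T_p\mathcal N:\gamma|_p(X,\cdot)=0\}$; for such data it is at most one-dimensional. The signature $\mathrm{sign}(q)$ of a quadratic form $q$ is the unordered multiset of diagonal entries ($0$, $-1$, $+1$) of its canonical form; $\mathrm{sign}(\gamma|_p)\setminus\{0\}$ means removing the single $0$ entry. *)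

From HB Require Import structures.
From mathcomp Require Import all_boot all_order all_algebra.
From mathcomp Require Import reals.
Set Implicit Arguments. Unset Strict Implicit. Unset Printing Implicit Defensive.
Import Order.TTheory GRing.Theory Num.Theory.
Local Open Scope ring_scope.

(* A quadratic (symmetric bilinear) form on R^m is represented by its Gram
   matrix Q; vectors are row vectors, q(x,y) = x *m Q *m y^T. *)

Definition is_sign (R : realType) (m : nat) (Q : 'M[R]_m) (s : seq R) : Prop :=
  exists P : 'M[R]_m, P \in unitmx /\
  exists d : 'rV[R]_m,
    (forall i, d 0 i \in [:: -1; 0; 1]) /\
    P^T *m Q *m P = diag_mx d /\
    perm_eq [seq d 0 i | i <- enum 'I_m] s.

(* The ambient form A|_p on T_pN x R ≅ R^(n+1). *)
Definition ambientA (R : realType) (n : nat) (gamma : 'M[R]_n) (ell : 'rV[R]_n)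
  (ell2 : R) : 'M[R]_(n + 1) :=
  block_mx gamma ell^T ell ell2%:M.

Definition nondeg_form (R : realType) (m : nat) (Q : 'M[R]_m) : Prop :=
  forall v : 'rV[R]_m, v *m Q = 0 -> v = 0.

Definition radical_nontrivial (R : realType) (n : nat) (gamma : 'M[R]_n) : Prop :=
  exists X : 'rV[R]_n, X != 0 /\ X *m gamma = 0.

Definition psd_form (R : realType) (n : nat) (gamma : 'M[R]_n) : Prop :=
  forall v : 'rV[R]_n, 0 <= (v *m gamma *m v^T) 0 0.

(* Diagonalise both forms by congruence, with diagonal entries in {-1, 0, 1}.
   A|_p is nondegenerate, so its signature contains no 0, while the radical of
   gamma|_p puts at least one 0 into sign(gamma|_p).  Since gamma|_p is the
   restriction of A|_p to the hyperplane T_pN, and a subspace on which a form is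
   positive definite meets a subspace on which it is nonpositive only in 0, the
   positive index of A|_p exceeds that of gamma|_p by at most one; applied to
   -A|_p the same holds for the negative indices.  Hence
     n + 1 = p_A + q_A <= p_gamma + q_gamma + 2 = n - z_gamma + 2 <= n + 1,
   so z_gamma = 1, p_A = p_gamma + 1 and q_A = q_gamma + 1.  In particular
   q_A = 1 iff q_gamma = 0, i.e. iff gamma|_p is positive semi-definite. *)

From HB Require Import structures.
From mathcomp Require Import all_boot all_order all_algebra perm.
From mathcomp Require Import reals zify.
Set Implicit Arguments. Unset Strict Implicit. Unset Printing Implicit Defensive.
Import Order.TTheory GRing.Theory Num.Theory.
Local Open Scope ring_scope.

Section CongruenceDiagonalization.
Variable R : numFieldType.

Definition bform m (Q : 'M[R]_m) (u v : 'rV[R]_m) := (u *m Q *m v^T) 0 0.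

Lemma congr_mx_entry k m (C : 'M[R]_(k, m)) (Q : 'M[R]_m) i j :
  (C *m Q *m C^T) i j = bform Q (row i C) (row j C).
Proof.
rewrite /bform !mxE; apply: eq_bigr => l _; rewrite !mxE; congr (_ * _).
by apply: eq_bigr => r _; rewrite !mxE.
Qed.

Lemma bform_delta m (Q : 'M[R]_m) i j :
  bform Q (delta_mx 0 i) (delta_mx 0 j) = Q i j.
Proof. by rewrite /bform -rowE trmx_delta -colE !mxE. Qed.

Lemma bformDl m (Q : 'M[R]_m) u u' v :
  bform Q (u + u') v = bform Q u v + bform Q u' v.
Proof. by rewrite /bform !mulmxDl [LHS]mxE. Qed.

Lemma bformDr m (Q : 'M[R]_m) u v v' :
  bform Q u (v + v') = bform Q u v + bform Q u v'.
Proof. by rewrite /bform linearD /= mulmxDr [LHS]mxE. Qed.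

Lemma congr_pivot m (Q : 'M[R]_m.+1) : Q^T = Q -> Q != 0 ->
  exists2 C, C \in unitmx & (C *m Q *m C^T) 0 0 != 0.
Proof.
move=> QT /matrix0Pn[i [j Qij]].
have pivot_diag k : Q k k != 0 -> exists2 C, C \in unitmx & (C *m Q *m C^T) 0 0 != 0.
  move=> Qkk; exists (tperm_mx 0 k); first exact: unitmx_perm.
  by rewrite congr_mx_entry tperm_mxEsub row_rowsub row1 tpermL bform_delta.
have [Qii|] := eqVneq (Q i i) 0; last exact: pivot_diag.
have [Qjj|] := eqVneq (Q j j) 0; last exact: pivot_diag.
have ij : i != j by apply: contraNneq Qij => <-; rewrite Qii.
(* The first row of C is e_i + e_j, on which the form takes the value 2 Q_ij. *)
set D := delta_mx i j : 'M[R]_m.+1.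
have D2 : D *m D = 0 by rewrite mul_delta_mx_cond eq_sym (negbTE ij) mulr0n.
exists (tperm_mx 0 i *m (1 + D)).
  rewrite unitmx_mul unitmx_perm; apply: (proj1 (@mulmx1_unit _ _ _ (1 - D) _)).
  by rewrite mulmxDl !mulmxBr !mul1mx mulmx1 D2 subr0 subrK.
rewrite congr_mx_entry row_mul tperm_mxEsub row_rowsub row1 tpermL mulmxDr mulmx1.
rewrite /D mul_delta_mx bformDl !bformDr !bform_delta Qii Qjj add0r addr0.
have -> : Q j i = Q i j by rewrite -[in LHS]QT mxE.
by rewrite -mulr2n mulrn_eq0 negb_or Qij.
Qed.

Lemma congr_block_step m (Q : 'M[R]_(1 + m)) : Q^T = Q -> Q 0 0 != 0 ->
  exists2 L, L \in unitmx &
  exists2 Q' : 'M_m, Q'^T = Q' & L *m Q *m L^T = block_mx (Q 0 0)%:M 0 0 Q'.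
Proof.
move=> QT; set a := Q 0 0 => a0.
have DT : (drsubmx Q)^T = drsubmx Q by rewrite -[in RHS]QT trmx_drsub.
have Qblock : Q = block_mx a%:M (dlsubmx Q)^T (dlsubmx Q) (drsubmx Q).
  rewrite -{1}[Q]submxK; congr block_mx; last by rewrite trmx_dlsub QT.
  by rewrite [LHS]mx11_scalar !mxE lshift0.
set c := dlsubmx Q in Qblock *; set D := drsubmx Q in Qblock DT *.
(* Eliminate the first column: subtract a^-1 c times the first row. *)
exists (block_mx 1 0 (- (a^-1 *: c)) 1).
  by rewrite unitmxE det_lblock !det1 mulr1 unitr1.
exists (D - a^-1 *: (c *m c^T)).
  by rewrite linearB /= linearZ /= trmx_mul trmxK DT.
rewrite Qblock tr_block_mx !mulmx_block !trmx0 !trmx1.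
rewrite !mul1mx !mulmx1 !mul0mx !mulmx0 ?addr0 ?add0r.
have -> : - (a^-1 *: c) *m a%:M + c = 0.
  by rewrite mul_mx_scalar scalerN scalerA mulfV // scale1r addNr.
have -> : a%:M *m (- (a^-1 *: c))^T + c^T = 0.
  by rewrite mul_scalar_mx linearN /= linearZ /= scalerN scalerA mulfV // scale1r addNr.
by rewrite mul0mx add0r mulNmx -scalemxAl addrC.
Qed.

Lemma congr_diag_exists m (Q : 'M[R]_m) : Q^T = Q ->
  exists2 B, B \in unitmx & exists c : 'rV_m, B *m Q *m B^T = diag_mx c.
Proof.
elim: m Q => [|m IH] Q QT.
  by exists 1; [exact: unitmx1 | exists 0; apply/matrixP => [[]]].
have [->|Q0] := eqVneq Q 0.
  by exists 1; [exact: unitmx1 | exists 0; rewrite mulmx0 mul0mx linear0].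
have [C Cu CQC] := congr_pivot QT Q0.
set Q1 := C *m Q *m C^T.
have Q1T : Q1^T = Q1 by rewrite /Q1 !trmx_mul trmxK QT mulmxA.
have [L Lu [Q' Q'T LQ1L]] := @congr_block_step m Q1 Q1T CQC.
have [B' B'u [c' B'Q'B']] := IH Q' Q'T.
set B1 := block_mx 1 0 0 B' : 'M_(1 + m).
have B1u : B1 \in unitmx by rewrite unitmxE det_ublock det1 mul1r -unitmxE.
exists (B1 *m L *m C); first by rewrite !unitmx_mul B1u Lu Cu.
exists (row_mx (Q1 0 0)%:M c').
have -> : B1 *m L *m C *m Q *m (B1 *m L *m C)^T = B1 *m (L *m Q1 *m L^T) *m B1^T.
  by rewrite /Q1 !trmx_mul !mulmxA.
have -> : diag_mx (row_mx (Q1 0 0)%:M c' : 'rV_(1 + m))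
    = block_mx (Q1 0 0)%:M 0 0 (diag_mx c').
  by rewrite diag_mx_row; congr block_mx; apply/matrixP => i j; rewrite !ord1 !mxE.
rewrite LQ1L -B'Q'B' tr_block_mx !mulmx_block !trmx0 !trmx1.
by rewrite !mul1mx !mulmx1 !mul0mx !mulmx0 ?addr0 ?add0r mul0mx.
Qed.

End CongruenceDiagonalization.

Section SignNormalization.
Variable R : rcfType.

Lemma sgr_signs (x : R) : Num.sg x \in [:: -1; 0; 1].
Proof. by rewrite !inE; case: sgrP; rewrite eqxx ?orbT. Qed.

Lemma sign_diag_exists m (Q : 'M[R]_m) : Q^T = Q ->
  exists2 P, P \in unitmx &
  exists2 d : 'rV_m, (forall i, d 0 i \in [:: -1; 0; 1]) & P^T *m Q *m P = diag_mx d.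
Proof.
move=> QT; have [B Bu [c BQB]] := congr_diag_exists QT.
pose s := \row_i (if c 0 i == 0 then 1 else (Num.sqrt `|c 0 i|)^-1).
have s_neq0 i : s 0 i != 0.
  rewrite mxE; have [_|c0] := eqVneq (c 0 i) 0; first by rewrite oner_eq0.
  by rewrite invr_eq0 sqrtr_eq0 -ltNge normr_gt0.
have s_scale i : s 0 i * c 0 i * s 0 i = Num.sg (c 0 i).
  rewrite mxE; have [->|c0] := eqVneq (c 0 i) 0; first by rewrite mulr0 mul0r sgr0.
  rewrite mulrAC -expr2 exprVn sqr_sqrtr ?normr_ge0 // mulrC {1}[c 0 i]numEsg.
  by rewrite mulfK ?normr_eq0.
exists (B^T *m diag_mx s).
  by rewrite unitmx_mul unitmx_tr Bu unitmxE det_diag unitfE; apply/prodf_neq0.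
exists (\row_i Num.sg (c 0 i)); first by move=> i; rewrite mxE sgr_signs.
rewrite !trmx_mul trmxK tr_diag_mx !mulmxA -(mulmxA _ B) -(mulmxA _ (B *m Q)) BQB.
by rewrite !mulmx_diag; congr diag_mx; apply/rowP => i; rewrite !mxE -s_scale !mxE.
Qed.

End SignNormalization.

Definition diag_seq (R : Type) m (d : 'rV[R]_m) := [seq d 0 i | i <- enum 'I_m].

Lemma size_diag_seq (R : Type) m (d : 'rV[R]_m) : size (diag_seq d) = m.
Proof. by rewrite size_map size_enum_ord. Qed.

Lemma rank_diag_mx (R : fieldType) m (d : 'rV[R]_m) :
  \rank (diag_mx d) = count (predC1 0) (diag_seq d).
Proof.
elim: m d => [|m IH] d; first by rewrite flatmx0 mxrank0 /diag_seq enum_ord0.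
change (\rank (diag_mx (d : 'rV_(1 + m))) = count (predC1 0) (diag_seq d)).
rewrite -[d in diag_mx d](hsubmxK (d : 'rV_(1 + m))) diag_mx_row rank_diag_block_mx IH.
rewrite /diag_seq enum_ordSl /= !count_map; congr (_ + _)%N; last first.
  by apply: eq_count => i /=; rewrite mxE; congr (d _ _ != 0); apply: val_inj.
rewrite (mx11_scalar (diag_mx _)) !mxE eqxx mulr1n rank_rV.
have -> : d 0 (lshift m (0 : 'I_1)) = d 0 ord0 by congr (d 0 _); apply: val_inj.
congr (~~ _); apply/eqP/eqP => [/matrixP/(_ 0 0)|->]; last exact: raddf0.
by rewrite !mxE eqxx mulr1n.
Qed.

Section Inertia.
Variable R : realFieldType.
Local Notation qf Q x := (bform Q x x).

Lemma inertia_rank_le k l m (Q : 'M[R]_m) (S : 'M_(k, m)) (T : 'M_(l, m)) :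
  (forall x, (x <= S)%MS -> x != 0 -> 0 < qf Q x) ->
  (forall x, (x <= T)%MS -> qf Q x <= 0) ->
  (\rank S + \rank T <= m)%N.
Proof.
move=> Spos Tnpos; rewrite -mxrank_sum_cap.
have [->|ST0] := eqVneq (S :&: T)%MS 0; first by rewrite mxrank0 addn0 rank_leq_col.
set x := nz_row (S :&: T)%MS.
have xS : (x <= S)%MS := submx_trans (nz_row_sub _) (capmxSl _ _).
have xT : (x <= T)%MS := submx_trans (nz_row_sub _) (capmxSr _ _).
have x0 : x != 0 by rewrite nz_row_eq0.
by have := lt_le_trans (Spos x xS x0) (Tnpos x xT); rewrite ltxx.
Qed.

(* The span of the columns P_i of P with a (d 0 i); when P^T Q P = diag d these
   columns are Q-orthogonal and Q(P_i, P_i) = d 0 i. *)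
Definition diag_span m (P : 'M[R]_m) (d : 'rV[R]_m) (a : pred R) :=
  diag_mx (\row_i (a (d 0 i))%:R) *m P^T.

Lemma rank_diag_span m (P : 'M[R]_m) d a :
  P \in unitmx -> \rank (diag_span P d a) = count a (diag_seq d).
Proof.
move=> Pu; rewrite mxrankMfree ?row_free_unit ?unitmx_tr // rank_diag_mx.
rewrite /diag_seq !count_map; apply: eq_count => i /=.
by rewrite mxE; case: (a _); rewrite ?oner_eq0 ?eqxx.
Qed.

Lemma sub_diag_span m (P : 'M[R]_m) d a x : (x <= diag_span P d a)%MS ->
  exists2 w : 'rV_m, x = w *m P^T & forall i, ~~ a (d 0 i) -> w 0 i = 0.
Proof.
case/submxP => u ->; exists (u *m diag_mx (\row_i (a (d 0 i))%:R)); first by rewrite mulmxA.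
by move=> i ai; rewrite mul_mx_diag !mxE (negbTE ai) mulr0.
Qed.

Lemma qf_diag_congr m (Q P : 'M[R]_m) d w : P^T *m Q *m P = diag_mx d ->
  qf Q (w *m P^T) = \sum_i d 0 i * w 0 i ^+ 2.
Proof.
move=> PQP; rewrite /bform trmx_mul trmxK !mulmxA.
rewrite -(mulmxA _ P^T) -(mulmxA _ (P^T *m Q)) PQP.
rewrite mul_mx_diag !mxE; apply: eq_bigr => i _; rewrite !mxE.
by rewrite mulrAC mulrC expr2.
Qed.

Lemma diag_span_pos m (Q P : 'M[R]_m) d : P^T *m Q *m P = diag_mx d ->
  forall x, (x <= diag_span P d (fun y => 0 < y)%R)%MS -> x != 0 -> 0 < qf Q x.
Proof.
move=> PQP x /sub_diag_span[w -> w0] x0; rewrite (qf_diag_congr _ PQP).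
have term_ge0 i : 0 <= d 0 i * w 0 i ^+ 2.
  have [di|/w0->] := boolP (0 < d 0 i); last by rewrite expr0n mulr0.
  by rewrite mulr_ge0 ?sqr_ge0 ?ltW.
rewrite lt_def sumr_ge0 // andbT; apply: contraNneq x0 => sum0.
suff -> : w = 0 by rewrite mul0mx.
apply/rowP => i; rewrite mxE; have [di|/w0//] := boolP (0 < d 0 i).
move/eqP: (psumr_eq0P (fun j _ => term_ge0 j) sum0 (i := i) isT).
by rewrite mulf_eq0 gt_eqF //= sqrf_eq0 => /eqP.
Qed.

Lemma diag_span_npos m (Q P : 'M[R]_m) d : P^T *m Q *m P = diag_mx d ->
  forall x, (x <= diag_span P d (predC (fun y => 0 < y)%R))%MS -> qf Q x <= 0.
Proof.
move=> PQP x /sub_diag_span[w -> w0]; rewrite (qf_diag_congr _ PQP).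
apply: sumr_le0 => i _; have [di|ndi] := boolP (0 < d 0 i).
  by rewrite w0 ?expr0n ?mulr0 //= di.
by rewrite mulr_le0_ge0 ?sqr_ge0 // leNgt.
Qed.

Lemma count_pos_restrict k m (Q : 'M[R]_m) (E : 'M[R]_(k, m)) P d P' d' :
  row_free E ->
  P \in unitmx -> P^T *m Q *m P = diag_mx d ->
  P' \in unitmx -> P'^T *m (E *m Q *m E^T) *m P' = diag_mx d' ->
  (count (fun y => 0 < y)%R (diag_seq d)
     <= count (fun y => 0 < y)%R (diag_seq d') + (m - k))%N.
Proof.
move=> Efree Pu PQP P'u P'QP'.
set T := diag_span P' d' (predC (fun y => 0 < y)) *m E.
have Tnpos x : (x <= T)%MS -> qf Q x <= 0.
  case/submxP=> u ->; rewrite mulmxA /bform trmx_mul !mulmxA.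
  rewrite -(mulmxA _ E) -(mulmxA _ (_ *m Q)).
  by apply: (diag_span_npos P'QP'); rewrite -mulmxA submxMl.
have := inertia_rank_le (diag_span_pos PQP) Tnpos.
rewrite rank_diag_span // mxrankMfree // rank_diag_span //.
have := count_predC (fun y => 0 < y) (diag_seq d'); rewrite size_diag_seq.
(* The counts occur with distinct but convertible instance paths, which lia would
   treat as different atoms; generalising identifies them. *)
move: (count _ (diag_seq d)) (count _ (diag_seq d')) (count (predC _) _) => p p' q; lia.
Qed.

Lemma count_neg_restrict k m (Q : 'M[R]_m) (E : 'M[R]_(k, m)) P d P' d' :
  row_free E ->
  P \in unitmx -> P^T *m Q *m P = diag_mx d ->
  P' \in unitmx -> P'^T *m (E *m Q *m E^T) *m P' = diag_mx d' ->
  (count (fun y => y < 0)%R (diag_seq d)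
     <= count (fun y => y < 0)%R (diag_seq d') + (m - k))%N.
Proof.
move=> Efree Pu PQP P'u P'QP'.
have count_opp m' (e : 'rV[R]_m') :
    count (fun y => 0 < y) (diag_seq (- e)) = count (fun y => y < 0) (diag_seq e).
  by rewrite /diag_seq !count_map; apply: eq_count => i /=; rewrite mxE oppr_gt0.
rewrite -!count_opp; apply: (count_pos_restrict (Q := - Q) Efree Pu _ P'u).
  by rewrite mulmxN mulNmx PQP raddfN.
by rewrite !(mulmxN, mulNmx) P'QP' raddfN.
Qed.

End Inertia.

Section SignSequences.
Variable R : numDomainType.
Local Notation signs := [:: -1; 0; 1 : R].
Implicit Types s t : seq R.

Lemma signs_eqE :
  (((-1 : R) == 0) = false) * (((-1 : R) == 1) = false) * (((0 : R) == -1) = false) *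
  (((0 : R) == 1) = false) * (((1 : R) == -1) = false) * (((1 : R) == 0) = false).
Proof.
by do !split; rewrite ?(eq_sym 0) ?oppr_eq0 ?oner_eq0 // ?(eq_sym 1) eqNr oner_eq0.
Qed.

Lemma perm_eq_signs s t : all (mem signs) s -> all (mem signs) t ->
  count_mem (-1) s = count_mem (-1) t -> count_mem 0 s = count_mem 0 t ->
  count_mem 1 s = count_mem 1 t -> perm_eq s t.
Proof.
move=> /allP sS /allP tS eN e0 e1; apply/allP => x; rewrite mem_cat.
by case/orP => [/sS|/tS]; rewrite !inE => /or3P[]/eqP->; apply/eqP.
Qed.

Lemma size_signs s : all (mem signs) s ->
  size s = (count_mem (-1)%R s + count_mem 0%R s + count_mem 1%R s)%N.
Proof.
elim: s => //= x s IH /andP[xS /IH->].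
by move: xS; rewrite !inE => /or3P[]/eqP->; rewrite !signs_eqE eqxx /=; lia.
Qed.

Lemma count_signs_pos s : all (mem signs) s -> count_mem 1 s = count (fun y => 0 < y) s.
Proof.
move=> /allP sS; apply: eq_in_count => x /sS.
by rewrite !inE => /or3P[]/eqP->; rewrite /= ?signs_eqE ?eqxx ?ltr01 ?ltxx ?oppr_gt0 ?ltr10.
Qed.

Lemma count_signs_neg s : all (mem signs) s -> count_mem (-1) s = count (fun y => y < 0) s.
Proof.
move=> /allP sS; apply: eq_in_count => x /sS.
by rewrite !inE => /or3P[]/eqP->; rewrite /= ?signs_eqE ?eqxx ?oppr_lt0 ?ltr01 ?ltxx ?ltr10.
Qed.

Lemma perm_signs_extend (sA sg : seq R) :
  all (mem signs) sA -> all (mem signs) sg -> size sA = (size sg).+1 ->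
  0 \notin sA -> 0 \in sg ->
  (count_mem 1%R sA <= (count_mem 1%R sg).+1)%N ->
  (count_mem (-1)%R sA <= (count_mem (-1)%R sg).+1)%N ->
  perm_eq sA ([:: -1; 1] ++ rem 0 sg).
Proof.
move=> sAS sgS sizeA A0 sg0 posA negA.
(* Stated over plain nats so that lia is not confused by the different (convertible)
   instance paths with which the counts below are elaborated. *)
have counting (aN a0 a1 gN g0 g1 : nat) :
    (aN + a0 + a1 = (gN + g0 + g1).+1)%N -> a0 = 0%N -> (0 < g0)%N ->
    (a1 <= g1.+1)%N -> (aN <= gN.+1)%N -> [/\ aN = gN.+1, g0 = 1%N & a1 = g1.+1].
  by move=> *; split; lia.
have A0c : count_mem 0 sA = 0%N by apply/count_memPn.
have g0c : (0 < count_mem 0%R sg)%N by rewrite -has_count has_pred1.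
have size_A := size_signs sAS; rewrite sizeA (size_signs sgS) in size_A.
have [eN g01 e1] := counting _ _ _ _ _ _ (esym size_A) A0c g0c posA negA.
apply: perm_eq_signs => //.
  rewrite all_cat /= !inE !eqxx !orbT /=; apply/allP => x /mem_rem; exact: (allP sgS).
all: rewrite count_cat count_rem sg0 /= ?signs_eqE ?eqxx /=.
all: by rewrite ?A0c ?g01 ?eN ?e1 ?subn0.
Qed.

Lemma perm_lorentzianE n (s : seq R) : all (mem signs) s -> 0 \notin s -> size s = n.+1 ->
  perm_eq (-1 :: nseq n 1) s = (count_mem (-1) s == 1%N).
Proof.
move=> sS s0 size_s; have s0c := count_memPn s0.
apply/idP/eqP => [/seq.permP <-|sN]; first by rewrite /= count_nseq /= eqxx signs_eqE.
have s1 : count_mem 1 s = n.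
  by move: (size_signs sS); rewrite size_s s0c sN; lia.
apply: perm_eq_signs => //=.
- by rewrite !inE eqxx all_nseq !inE eqxx !orbT.
all: by rewrite count_nseq /= ?s0c ?sN ?s1 ?signs_eqE ?eqxx ?mul0n ?mul1n.
Qed.

End SignSequences.

Section Signature.
Variable R : realType.
Local Notation signs := [:: -1; 0; 1 : R].

Lemma is_sign_exists m (Q : 'M[R]_m) : Q^T = Q -> exists s, is_sign Q s.
Proof.
move=> QT; have [P Pu [d dS PQP]] := sign_diag_exists QT.
by exists (diag_seq d), P; split=> //; exists d.
Qed.

Lemma is_sign_perm m (Q : 'M[R]_m) s t : is_sign Q s -> perm_eq s t -> is_sign Q t.
Proof.
move=> [P [Pu [d [dS [PQP ds]]]]] st.
by exists P; split=> //; exists d; do !split=> //; exact: perm_trans ds st.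
Qed.

Lemma is_sign_signs m (Q : 'M[R]_m) s : is_sign Q s -> size s = m /\ all (mem signs) s.
Proof.
move=> [P [_ [d [dS [_ ds]]]]]; rewrite -(perm_size ds) size_diag_seq -(perm_all _ ds).
by split=> //; apply/allP => x /mapP[i _ ->]; exact: dS.
Qed.

Lemma unitmx_is_sign m (Q : 'M[R]_m) s : is_sign Q s -> (Q \in unitmx) = (0 \notin s).
Proof.
move=> [P [Pu [d [_ [PQP ds]]]]]; rewrite -(perm_mem ds).
have <- : (P^T *m Q *m P \in unitmx) = (Q \in unitmx).
  by rewrite !unitmx_mul unitmx_tr Pu andbT.
rewrite PQP unitmxE det_diag unitfE; apply/prodf_neq0/idP => [d_neq0|s0 i _].
  by apply/mapP => -[i _ di0]; have := d_neq0 i isT; rewrite -di0 eqxx.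
by apply: contraNneq s0 => di0; apply/mapP; exists i; rewrite ?mem_enum.
Qed.

Lemma nondeg_form_unitmx m (Q : 'M[R]_m) : nondeg_form Q -> Q \in unitmx.
Proof.
move=> ndQ; rewrite unitmxE unitfE; apply/negP => /det0P[v v0 /ndQ v_eq0].
by rewrite v_eq0 eqxx in v0.
Qed.

Lemma radical_nontrivial_unitmx m (Q : 'M[R]_m) : radical_nontrivial Q -> Q \notin unitmx.
Proof. by move=> [X [X0 XQ]]; rewrite unitmxE unitfE negbK; apply/det0P; exists X. Qed.

Lemma is_sign_count_restrict k m (Q : 'M[R]_m) (E : 'M[R]_(k, m)) s t :
  row_free E -> is_sign Q s -> is_sign (E *m Q *m E^T) t ->
  (count_mem 1%R s <= count_mem 1%R t + (m - k))%N /\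
  (count_mem (-1)%R s <= count_mem (-1)%R t + (m - k))%N.
Proof.
move=> Efree sQ tQ; have [_ sS] := is_sign_signs sQ; have [_ tS] := is_sign_signs tQ.
case: sQ tQ => [P [Pu [d [_ [PQP ds]]]]] [P' [P'u [d' [_ [P'QP' d't]]]]].
rewrite !count_signs_pos // !count_signs_neg //.
split; rewrite -(seq.permP ds) -(seq.permP d't).
  exact: count_pos_restrict Efree Pu PQP P'u P'QP'.
exact: count_neg_restrict Efree Pu PQP P'u P'QP'.
Qed.

Lemma psd_form_is_sign m (Q : 'M[R]_m) s : is_sign Q s -> psd_form Q <-> -1 \notin s.
Proof.
move=> [P [Pu [d [dS [PQP ds]]]]]; rewrite -(perm_mem ds); split => [psdQ | dN1 v].
  apply/mapP => -[i _ di]; have := psdQ (row i P^T).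
  by rewrite -/(bform _ _ _) -congr_mx_entry trmxK PQP mxE eqxx mulr1n -di ler0N1.
have PTu : P^T \in unitmx by rewrite unitmx_tr.
rewrite -(mulmxKV PTu v) -/(bform _ _ _) (qf_diag_congr _ PQP).
apply: sumr_ge0 => i _; rewrite mulr_ge0 ?sqr_ge0 //.
have : d 0 i != -1 by apply: contraNneq dN1 => <-; apply: map_f; rewrite mem_enum.
by move: (dS i); rewrite !inE => /or3P[]/eqP->; rewrite ?eqxx ?ler01.
Qed.

End Signature.

Section AmbientForm.
Variables (R : realType) (n : nat) (gamma : 'M[R]_n) (ell : 'rV[R]_n) (ell2 : R).
Local Notation A := (ambientA gamma ell ell2).
Hypotheses (gammaT : gamma^T = gamma) (ndA : nondeg_form A)
  (rad : radical_nontrivial gamma).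

Lemma ambientA_tr : A^T = A.
Proof. by rewrite /ambientA tr_block_mx gammaT trmxK tr_scalar_mx. Qed.

Let E : 'M[R]_(n, n + 1) := row_mx 1%:M 0.

Lemma ambientA_restrict : E *m A *m E^T = gamma.
Proof.
rewrite /E /ambientA mul_row_block !mul1mx !mul0mx !addr0 tr_row_mx trmx1 trmx0.
by rewrite mul_row_col mulmx1 mulmx0 addr0.
Qed.

Lemma perm_is_sign_ambientA sg sA :
  is_sign gamma sg -> is_sign A sA -> perm_eq sA ([:: -1; 1] ++ rem 0 sg).
Proof.
move=> gsg AsA.
have [size_g gS] := is_sign_signs gsg; have [size_A AS] := is_sign_signs AsA.
have Efree : row_free E by rewrite /row_free rank_row_mx0 mxrank1.
have gsg' : is_sign (E *m A *m E^T) sg by rewrite ambientA_restrict.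
have [pos neg] := is_sign_count_restrict Efree AsA gsg'; rewrite addKn !addn1 in pos neg.
apply: perm_signs_extend => //; first by rewrite size_A size_g addn1.
  by rewrite -(unitmx_is_sign AsA) nondeg_form_unitmx.
by have := radical_nontrivial_unitmx rad; rewrite (unitmx_is_sign gsg) negbK.
Qed.

Lemma is_sign_ambientA sg : is_sign gamma sg ->
  forall sA, is_sign A sA <-> perm_eq sA ([:: -1; 1] ++ rem 0 sg).
Proof.
move=> gsg sA; split => [|sA_sg]; first exact: perm_is_sign_ambientA.
have [sA0 AsA0] := is_sign_exists ambientA_tr.
apply: (is_sign_perm AsA0) (perm_trans (perm_is_sign_ambientA gsg AsA0) _).
by rewrite perm_sym.
Qed.

Lemma is_sign_ambientA_lorentzian : is_sign A (-1 :: nseq n 1) <-> psd_form gamma.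
Proof.
have [sg gsg] := is_sign_exists gammaT; have [sA AsA] := is_sign_exists ambientA_tr.
have sA_sg := perm_is_sign_ambientA gsg AsA; have [size_A AS] := is_sign_signs AsA.
have sA0 : 0 \notin sA by rewrite -(unitmx_is_sign AsA) nondeg_form_unitmx.
have sA_N1 : count_mem (-1) sA = (count_mem (-1) sg).+1.
  by rewrite (seq.permP sA_sg) count_cat count_rem /= eqxx !signs_eqE andbF subn0.
apply: iff_trans (is_sign_ambientA gsg _) (iff_trans _ (iff_sym (psd_form_is_sign gsg))).
rewrite -(permPr sA_sg) perm_lorentzianE ?size_A ?addn1 // sA_N1 eqSS.
exact: iff_trans (iff_sym (rwP eqP)) (rwP count_memPn).
Qed.

End AmbientForm.

Theorem lemma2p3 (R : realType) (n : nat) (gamma : 'M[R]_n) (ell : 'rV[R]_n)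
    (ell2 : R) :
  gamma^T = gamma ->
  nondeg_form (ambientA gamma ell ell2) ->
  radical_nontrivial gamma ->
  (forall sg : seq R, is_sign gamma sg ->
     forall sA : seq R,
       is_sign (ambientA gamma ell ell2) sA <->
       perm_eq sA ([:: -1; 1] ++ rem 0 sg)) /\
  (is_sign (ambientA gamma ell ell2) (-1 :: nseq n 1) <-> psd_form gamma).
Proof.
move=> gammaT ndA rad; split; first exact: is_sign_ambientA.
exact: is_sign_ambientA_lorentzian.
Qed.
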